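(* Every $2$-tree $G$ has, for every vertex $v\in V(G)$, a $1$-perfect orientation in which $v$ is a sink (in particular every $2$-tree is $1$-perfectly orientable). Every hollowed $2$-tree is $1$-perfectly orientable, but each of its $1$-perfect orientations has no sink.
   Context: An orientation of $G$ is $1$-perfect if for every vertex the out-neighborhood is a clique in $G$; $G$ is $1$-perfectly orientable if it has one. A sink is a vertex of out-degree $0$. $2$-trees: $K_2$ is a $2$-tree, and adding to a $2$-tree a new vertex adjacent to exactly two adjacent vertices yields a $2$-tree; there are no others. Hollowed $2$-trees: every cycle of length at least $4$ is a hollowed $2$-tree, and adding to a hollowed $2$-tree a new vertex adjacent to exactly two adjacent vertices yields a hollowed $2$-tree; there are no others. *)

(* Simple graphs on a finite vertex type T, given by an
   edge relation E : rel T (assumed symmetric and irreflexive in the theorem). *)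
From mathcomp Require Import all_boot.
Set Implicit Arguments. Unset Strict Implicit. Unset Printing Implicit Defensive.

Section Graphs.
Variable T : finType.
Implicit Types (E D : rel T) (V : {set T}).

Inductive two_tree E : {set T} -> Prop :=
| two_tree_K2 x y : x != y -> E x y -> two_tree E [set x; y]
| two_tree_add V x y z :
    two_tree E V -> x \in V -> y \in V -> E x y -> z \notin V ->
    (forall w, w \in V -> E z w = (w == x) || (w == y)) ->
    two_tree E (z |: V).

Definition is_long_cycle E V : Prop :=
  exists s : seq T, [/\ uniq s, 4 <= size s, V = [set x in s] &
    forall x y, x \in V -> y \in V -> E x y = (y == next s x) || (x == next s y)].

Inductive hollowed_two_tree E : {set T} -> Prop :=
| hollowed_cycle V : is_long_cycle E V -> hollowed_two_tree E V
| hollowed_add V x y z :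
    hollowed_two_tree E V -> x \in V -> y \in V -> E x y -> z \notin V ->
    (forall w, w \in V -> E z w = (w == x) || (w == y)) ->
    hollowed_two_tree E (z |: V).

(* D (arcs: D x y means x -> y) is an orientation of the graph (T, E):
   every arc is an edge and every edge gets exactly one direction. *)
Definition is_orientation E D : Prop :=
  (forall x y, D x y -> E x y) /\ (forall x y, E x y -> D x y (+) D y x).

Definition one_perfect E D : Prop :=
  is_orientation E D /\
  forall x y z, D x y -> D x z -> y != z -> E y z.

Definition one_perfectly_orientable E : Prop := exists D, one_perfect E D.

Definition sink D (v : T) : Prop := forall y, ~~ D v y.

End Graphs.

From mathcomp Require Import all_boot.
Set Implicit Arguments. Unset Strict Implicit. Unset Printing Implicit Defensive.

(* For 2-trees one carries a stronger invariant through the construction: for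
   every edge ab there is a 1-perfect orientation in which a is a sink and b
   points only to a.  A vertex z glued onto an edge xy is oriented towards x
   and y when the edge ab is old; given an orientation with sink x and
   N+(y) = {x}, adding x -> z, y -> z makes z the sink, and adding z -> x,
   y -> z gives N+(z) = {x}.
   Hollowed 2-trees are orientable by orienting the cycle cyclically and every
   glued vertex towards its two neighbours.  They have no sink: on an induced
   cycle of length at least 4 the two neighbours of a vertex are nonadjacent,
   so a vertex not pointing forward forces its successor not to point forward,
   which eventually contradicts a sink; and a glued vertex z cannot be a sink,
   since x and y would point to z and hence, by 1-perfectness, to each other. *)

Lemma next_window (T : eqType) (s : seq T) u : uniq s -> 4 <= size s -> u \in s ->
  uniq [:: u; next s u; next s (next s u); next s (next s (next s u))].
Proof.
move=> Us s_ge4 /rot_to[i p s_rot].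
have Up : uniq (u :: p) by rewrite -s_rot rot_uniq.
have nextE : next (u :: p) =1 next s by rewrite -s_rot; apply: next_rot.
rewrite -!nextE.
have : 3 <= size p by rewrite -ltnS -(size_rot i s) s_rot in s_ge4.
case: p Up {s_rot nextE} => [|a [|b [|c q]]] // Up _.
move: (cycle_next Up) => /and4P[/eqP-> /eqP-> /eqP-> _].
by have := take_uniq 4 Up; rewrite /= take0.
Qed.

Section OnePerfectInduced.
Variables (T : finType) (E : rel T).
Hypotheses (Esym : symmetric E) (Eirr : irreflexive E).
Implicit Types (V W : {set T}) (D : rel T).

Definition one_perfect_in V D : Prop :=
  [/\ forall u w, D u w -> [&& u \in V, w \in V & E u w],
      forall u w, u \in V -> w \in V -> E u w -> D u w (+) D w u &
      forall u w1 w2, D u w1 -> D u w2 -> w1 != w2 -> E w1 w2].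

Definition restrict V D : rel T := [rel u w | [&& u \in V, w \in V & D u w]].

(* The invariant of the 2-tree induction: a sink at a alone would not survive
   gluing a new sink onto an edge at a. *)
Definition anchored V a b : Prop :=
  exists D, [/\ one_perfect_in V D, sink D a & forall w, D b w = (w == a)].

Definition sinkless V : Prop :=
  forall D, one_perfect_in V D -> forall v, v \in V -> exists w, D v w.

Definition attach D z x y (inward : pred T) : rel T :=
  [rel u w | [|| D u w, [&& u == z, (w == x) || (w == y) & ~~ inward w]
                      | [&& w == z, (u == x) || (u == y) & inward u]]].

Lemma one_perfect_in_setT D : one_perfect_in [set: T] D <-> one_perfect E D.
Proof.
split=> [[arcs orient clique] | [[arcE orient] clique]].
  by split=> //; split=> [u w /arcs/and3P[] | u w]; last exact: orient.
by split=> // [u w Duw | u w _ _]; [rewrite !in_setT arcE | exact: orient].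
Qed.

Lemma one_perfect_in_restrict V W D :
  V \subset W -> one_perfect_in W D -> one_perfect_in V (restrict V D).
Proof.
move=> /subsetP VW [arcs orient clique].
rewrite /restrict; split=> /= [u w /and3P[-> -> /arcs/and3P[_ _ ->]] // | u w uV wV Euw |].
  by rewrite uV wV orient ?VW.
by move=> u w1 w2 /and3P[_ _ D1] /and3P[_ _ D2]; apply: clique D1 D2.
Qed.

Section Attach.
Variables (V : {set T}) (x y z : T).
Hypotheses (xV : x \in V) (yV : y \in V) (Exy : E x y) (zV : z \notin V).
Hypothesis Ez : forall w, w \in V -> E z w = (w == x) || (w == y).

Let neq_z w : w \in V -> (w == z) = false.
Proof. by move=> wV; apply: contraNF zV => /eqP <-. Qed.

Let no_arc_at_z D w : one_perfect_in V D -> D z w = false /\ D w z = false.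
Proof. by case=> arcs _ _; split; apply: contraNF zV => /arcs/and3P[]. Qed.

Let triangle a b : a \in [:: x; y; z] -> b \in [:: x; y; z] -> a != b -> E a b.
Proof.
have Ezx : E z x by rewrite Ez ?eqxx.
have Ezy : E z y by rewrite Ez ?eqxx ?orbT.
by rewrite !inE => /or3P[]/eqP-> /or3P[]/eqP->; rewrite ?eqxx // => _; rewrite Esym.
Qed.

Lemma one_perfect_in_attach D (inward : pred T) :
  one_perfect_in V D ->
  (forall u w, (u == x) || (u == y) -> inward u -> D u w -> (w == x) || (w == y)) ->
  one_perfect_in (z |: V) (attach D z x y inward).
Proof.
move=> Dp inward_ok; have [arcs orient clique] := Dp.
have noD w : D z w = false := (no_arc_at_z w Dp).1.
have noD' w : D w z = false := (no_arc_at_z w Dp).2.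
have xyV w : (w == x) || (w == y) -> w \in V by case/orP=> /eqP->.
have in_tri w : (w == x) || (w == y) -> w \in [:: x; y; z] by rewrite !inE orbA => ->.
have [zx zy] : (z == x) = false /\ (z == y) = false by rewrite !(eq_sym z) !neq_z.
rewrite /attach; split.
- move=> u w /or3P[/arcs/and3P[uV wV ->] | /and3P[/eqP-> wxy _] | /and3P[/eqP-> uxy _]].
  + by rewrite !in_setU1 uV wV !orbT.
  + by have wV := xyV _ wxy; rewrite !in_setU1 eqxx wV Ez ?orbT.
  + by have uV := xyV _ uxy; rewrite !in_setU1 eqxx uV Esym Ez ?orbT.
- move=> u w; rewrite !in_setU1 => /predU1P[-> | uV] /predU1P[-> | wV].
  + by rewrite Eirr.
  + rewrite Ez //= noD noD' eqxx neq_z //= => ->; by case: (inward w).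
  + rewrite Esym Ez //= noD noD' eqxx neq_z //= orbF => ->; by case: (inward u).
  + by rewrite /= !neq_z //= !orbF; apply: orient.
- move=> u w1 w2; have [-> | uz] := eqVneq u z.
    rewrite /= !noD eqxx zx zy /= !andbF !orbF.
    by move=> /andP[/in_tri ? _] /andP[/in_tri ? _]; apply: triangle.
  rewrite /= (negbTE uz) /=.
  have [/andP[uxy iu] | plain] := boolP (((u == x) || (u == y)) && inward u); last first.
    by rewrite !andbF !orbF; exact: clique.
  rewrite !andbT.
  have tgt w : D u w || (w == z) -> w \in [:: x; y; z].
    by case/orP=> [/(inward_ok _ _ uxy iu)/in_tri | /eqP->] //; rewrite !inE eqxx !orbT.
  by move=> /tgt ? /tgt ?; apply: triangle.
Qed.

Lemma anchored_attach_old a b :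
  a \in V -> b \in V -> anchored V a b -> anchored (z |: V) a b.
Proof.
move=> aV bV [D [Dp Da Db]]; exists (attach D z x y pred0); split.
- by apply: one_perfect_in_attach.
- by move=> w; rewrite /attach /= (negbTE (Da w)) neq_z //= !andbF.
- by move=> w; rewrite /attach /= Db neq_z //= !andbF !orbF.
Qed.

Lemma anchored_attach_new :
  anchored V x y -> anchored (z |: V) z x /\ anchored (z |: V) x z.
Proof.
move=> [D [Dp Dx Dy]].
have noD w : D z w = false := (no_arc_at_z w Dp).1.
have [xz yz] : (x == z) = false /\ (y == z) = false by rewrite !neq_z.
have xy : (x == y) = false by apply: contraTF Exy => /eqP->; rewrite Eirr.
have out_xy u w : (u == x) || (u == y) -> D u w -> (w == x) || (w == y).
  by case/orP=> /eqP->; [rewrite (negbTE (Dx w)) | rewrite Dy => ->].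
split.
- exists (attach D z x y predT); split.
  + by apply: one_perfect_in_attach => // u w uxy _; apply: out_xy.
  + by move=> w; rewrite /attach /= noD eqxx !(eq_sym z) xz yz /= !andbF.
  + by move=> w; rewrite /attach /= (negbTE (Dx w)) xz eqxx /= andbT.
- exists (attach D z x y (pred1 y)); split.
  + by apply: one_perfect_in_attach => // u w uxy _; apply: out_xy.
  + by move=> w; rewrite /attach /= (negbTE (Dx w)) xz xy /= !andbF.
  + move=> w; rewrite /attach /= noD eqxx !(eq_sym z) xz yz /= !andbF orbF.
    by have [->|] := eqVneq w y; rewrite ?orbT ?andbT ?orbF // eq_sym xy.
Qed.

Lemma sinkless_attach : sinkless V -> sinkless (z |: V).
Proof.
move=> IH D Dp; have [arcs orient clique] := Dp.
have out_V u : u \in V -> exists2 w, w \in V & D u w.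
  move=> /(IH _ (one_perfect_in_restrict (subsetUr [set z] V) Dp)).
  by case=> w /and3P[_ wV Duw]; exists w.
move=> v /setU1P[-> | /out_V [w _ Dvw]]; last by exists w.
case: (pickP (D z)) => [w Dzw | no_out]; first by exists w.
have zVz : z \in z |: V := setU11 z V.
have Vz w : w \in V -> w \in z |: V by move=> wV; rewrite setU1r.
have into_z p q : p \in V -> (forall w, w \in V -> E z w -> (w == p) || (w == q)) ->
    E z p -> D p q.
  move=> pV Ezpq Ezp.
  have Dpz : D p z by move: (orient _ _ zVz (Vz _ pV) Ezp); rewrite no_out.
  have [w wV Dpw] := out_V p pV.
  have /and3P[_ _ Epw] := arcs _ _ Dpw.
  have /Ezpq : E z w by rewrite Esym (clique _ _ _ Dpw Dpz) ?neq_z.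
  case/(_ wV)/orP=> /eqP wE; last by rewrite -wE.
  by rewrite wE Eirr in Epw.
have Dxy : D x y by apply: (into_z _ _ xV) => [w /Ez -> // |]; rewrite Ez ?eqxx.
have Dyx : D y x.
  by apply: (into_z _ _ yV) => [w /Ez -> | ]; [rewrite orbC | rewrite Ez ?eqxx ?orbT].
by move: (orient _ _ (Vz _ xV) (Vz _ yV) Exy); rewrite Dxy Dyx.
Qed.

End Attach.

Lemma anchored_edge a b : E a b -> anchored [set a; b] a b.
Proof.
move=> Eab; have ab : (a == b) = false by apply: contraTF Eab => /eqP->; rewrite Eirr.
exists (fun u w => (u == b) && (w == a)); split=> [|w|w] /=; rewrite ?eqxx ?ab //.
split=> [u w /andP[/eqP-> /eqP->] | u w | u w1 w2 /andP[_ /eqP->] /andP[_ /eqP->]].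
- by rewrite !inE !eqxx orbT Esym.
- by rewrite !inE => /orP[]/eqP-> /orP[]/eqP->; rewrite ?Eirr //= !eqxx ab.
- by rewrite eqxx.
Qed.

Lemma two_tree_anchored V a b :
  two_tree E V -> a \in V -> b \in V -> E a b -> anchored V a b.
Proof.
move=> G; elim: G a b => {V} [x y _ Exy | V x y z _ IH xV yV Exy zV Ez] a b.
  move=> aV bV Eab; suff -> : [set x; y] = [set a; b] by apply: anchored_edge.
  move: aV bV Eab; rewrite !inE => /orP[]/eqP-> /orP[]/eqP->; rewrite ?Eirr //.
  by rewrite setUC.
have Eyx : E y x by rewrite Esym.
have Ez' w : w \in V -> E z w = (w == y) || (w == x) by move=> wV; rewrite orbC Ez.
have [z_x x_z] := anchored_attach_new xV yV Exy zV Ez (IH x y xV yV Exy).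
have [z_y y_z] := anchored_attach_new yV xV Eyx zV Ez' (IH y x yV xV Eyx).
rewrite !in_setU1 => /predU1P[-> | aV] /predU1P[-> | bV].
- by rewrite Eirr.
- by rewrite Ez // => /orP[]/eqP->.
- by rewrite Esym Ez // => /orP[]/eqP->.
- by move=> Eab; apply: (anchored_attach_old xV yV Exy zV Ez aV bV (IH a b aV bV Eab)).
Qed.

Lemma two_tree_neighbour V v : two_tree E V -> v \in V -> exists2 w, w \in V & E v w.
Proof.
move=> G; elim: G v => {V} [x y _ Exy | V x y z _ IH xV _ _ _ Ez] v.
  by rewrite !inE => /orP[]/eqP->; [exists y | exists x]; rewrite ?inE ?eqxx ?orbT // Esym.
rewrite in_setU1 => /predU1P[-> | /IH [w wV Evw]].
  by exists x; rewrite ?in_setU1 ?xV ?orbT // Ez ?eqxx.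
by exists w; rewrite // in_setU1 wV orbT.
Qed.

Lemma two_tree_nonempty V : two_tree E V -> exists v, v \in V.
Proof. by case=> [x y | ? ? ? z] *; [exists x | exists z]; rewrite !inE eqxx. Qed.

Section LongCycle.
Variable s : seq T.
Hypotheses (Us : uniq s) (s_ge4 : 4 <= size s).
Hypothesis Es : forall u w, u \in s -> w \in s -> E u w = (w == next s u) || (u == next s w).

Let next2_neq u : u \in s -> next s (next s u) != u.
Proof.
move/(next_window Us s_ge4); rewrite /= !inE !negb_or => /and4P[/and3P[_ + _] _ _ _].
by rewrite eq_sym.
Qed.

Let next2_not_adjacent u : u \in s -> ~~ E u (next s (next s u)).
Proof.
move=> us; rewrite Es ?mem_next // negb_or eq_sym.
have := next_window Us s_ge4 us; rewrite /= !inE !negb_or.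
by case/and4P=> /and3P[_ _ ->] /andP[-> _].
Qed.

Lemma long_cycle_one_perfect :
  one_perfect_in [set u in s] (fun u w => (u \in s) && (w == next s u)).
Proof.
split=> [u w /andP[us /eqP->] | u w | u w1 w2 /andP[_ /eqP->] /andP[_ /eqP->]].
- by rewrite !inE us mem_next us Es ?mem_next // eqxx.
- rewrite !inE => us ws; rewrite Es // us ws /=.
  by case/orP=> /eqP->; rewrite eqxx ?addbT /= eq_sym next2_neq ?mem_next.
- by rewrite eqxx.
Qed.

Lemma long_cycle_sinkless : sinkless [set u in s].
Proof.
move=> D [arcs orient clique] v; rewrite inE => vs.
case: (pickP (D v)) => [w Dvw | no_out]; first by exists w.
have arc_back u : u \in s -> ~~ D u (next s u) -> D (next s u) u.
  move=> us; have := orient u (next s u); rewrite !inE mem_next us Es ?mem_next // eqxx.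
  by move=> /(_ isT isT isT); case: (D u _).
have stay_back u : u \in s -> ~~ D u (next s u) -> ~~ D (next s u) (next s (next s u)).
  move=> us Nu; apply: contra (next2_not_adjacent us) => Dnn.
  by apply: clique (arc_back u us Nu) Dnn _; rewrite eq_sym next2_neq.
(* [next s] maps P injectively into itself, hence onto P; so the predecessor
   of v is in P, although it must point to the sink v. *)
pose P := [set u in s | ~~ D u (next s u)].
have P_next : next s @: P = P.
  apply/eqP; rewrite eqEcard card_imset ?leqnn ?andbT; last exact: can_inj (prev_next Us).
  apply/subsetP=> w /imsetP[u]; rewrite !inE => /andP[us Nu] ->.
  by rewrite mem_next us stay_back.
have : v \in P by rewrite inE vs no_out.
rewrite -P_next => /imsetP[u]; rewrite inE => /andP[us Nu] vE.
by move: (arc_back u us Nu); rewrite -vE no_out.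
Qed.

End LongCycle.

Lemma hollowed_two_tree_one_perfect V : hollowed_two_tree E V -> exists D, one_perfect_in V D.
Proof.
elim=> {V} [V [s [Us s_ge4 -> Es]] | V x y z _ [D Dp] xV yV Exy zV Ez].
  by eexists; apply: long_cycle_one_perfect => // u w us ws; apply: Es; rewrite inE.
by exists (attach D z x y pred0); apply: one_perfect_in_attach.
Qed.

Lemma hollowed_two_tree_sinkless V : hollowed_two_tree E V -> sinkless V.
Proof.
elim=> {V} [V [s [Us s_ge4 -> Es]] | V x y z _ IH xV yV Exy zV Ez].
  by apply: long_cycle_sinkless => // u w us ws; apply: Es; rewrite inE.
exact: (sinkless_attach xV yV Exy zV Ez IH).
Qed.

End OnePerfectInduced.

Theorem lemma4p2 :
  (forall (T : finType) (E : rel T), symmetric E -> irreflexive E ->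
     two_tree E [set: T] ->
     (forall v : T, exists D : rel T, one_perfect E D /\ sink D v) /\
     one_perfectly_orientable E) /\
  (forall (T : finType) (E : rel T), symmetric E -> irreflexive E ->
     hollowed_two_tree E [set: T] ->
     one_perfectly_orientable E /\
     (forall D : rel T, one_perfect E D -> forall v : T, ~ sink D v)).
Proof.
split=> T E Esym Eirr G.
- have sink_at v : exists D, one_perfect E D /\ sink D v.
    have [b _ Evb] := two_tree_neighbour Esym G (in_setT v).
    have [D [/one_perfect_in_setT Dp Dv _]] :=
      two_tree_anchored Esym Eirr G (in_setT v) (in_setT b) Evb.
    by exists D.
  split=> //; have [v _] := two_tree_nonempty G.
  by have [D [Dp _]] := sink_at v; exists D.
- split.
    by have [D /one_perfect_in_setT] := hollowed_two_tree_one_perfect Esym Eirr G; exists D.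
  move=> D /one_perfect_in_setT Dp v v_sink.
  have [w Dvw] := hollowed_two_tree_sinkless Esym Eirr G Dp (in_setT v).
  by move: (v_sink w); rewrite Dvw.
Qed.
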